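(* Let $T=(A_1;A_2;\dots;A_p)$ be an $m\times p\times n$ quaternion tensor and $r\ge1$ an integer. Then $\mathrm{rank}(T)\le r$ if and only if there exist $r\times r$ diagonal matrices $D_1,\dots,D_p$ with quaternion entries, an $m\times r$ quaternion matrix $P$ and an $r\times n$ quaternion matrix $Q$ such that $A_k=PD_kQ$ for all $k=1,\dots,p$.
   Context: $\mathbb{H}$ denotes the real quaternions. An $n_1\times n_2\times n_3$ quaternion tensor is an array $T=(T_{ijk})$ with entries in $\mathbb{H}$, $1\le i\le n_1$, $1\le j\le n_2$, $1\le k\le n_3$; it is written $T=(A_1;\dots;A_{n_2})$ where the frontal slice $A_j$ is the $n_1\times n_3$ matrix $(T_{ijk})_{i,k}$. A nonzero tensor is simple if $T_{ijk}=a_ib_jc_k$ (quaternion product in this order) for some $\vec a\in\mathbb{H}^{n_1},\vec b\in\mathbb{H}^{n_2},\vec c\in\mathbb{H}^{n_3}$. The rank of $T$ is the least number of simple tensors summing to $T$ (rank of zero tensor is $0$). *)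

From HB Require Import structures.
From mathcomp Require Import all_boot all_order all_algebra.
From mathcomp Require Import ring.
From mathcomp Require Import boolp reals.
Set Implicit Arguments. Unset Strict Implicit. Unset Printing Implicit Defensive.
Import Order.TTheory GRing.Theory Num.Theory.
Local Open Scope ring_scope.

(* Real quaternions  H = { q0 + q1 i + q2 j + q3 k }  over R : realType *)
Section Quaternions.
Variable R : realType.

Record quat := Quat { q0 : R; q1 : R; q2 : R; q3 : R }.

Definition quat2tup (q : quat) := (q0 q, q1 q, q2 q, q3 q).
Definition tup2quat (t : R * R * R * R) := let: (a, b, c, d) := t in Quat a b c d.
Lemma quat2tupK : cancel quat2tup tup2quat. Proof. by case. Qed.

HB.instance Definition _ := Choice.copy quat (can_type quat2tupK).

Definition quat0 := Quat 0 0 0 0.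
Definition quat1 := Quat 1 0 0 0.
Definition quat_add (a b : quat) :=
  Quat (q0 a + q0 b) (q1 a + q1 b) (q2 a + q2 b) (q3 a + q3 b).
Definition quat_opp (a : quat) := Quat (- q0 a) (- q1 a) (- q2 a) (- q3 a).
(* Hamilton product: i^2 = j^2 = k^2 = ijk = -1 *)
Definition quat_mul (a b : quat) :=
  Quat (q0 a * q0 b - q1 a * q1 b - q2 a * q2 b - q3 a * q3 b)
       (q0 a * q1 b + q1 a * q0 b + q2 a * q3 b - q3 a * q2 b)
       (q0 a * q2 b - q1 a * q3 b + q2 a * q0 b + q3 a * q1 b)
       (q0 a * q3 b + q1 a * q2 b - q2 a * q1 b + q3 a * q0 b).

Lemma quat_addA : associative quat_add.
Proof. by case=> ????[????][????]; congr Quat => /=; ring. Qed.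
Lemma quat_addC : commutative quat_add.
Proof. by case=> ????[????]; congr Quat => /=; ring. Qed.
Lemma quat_add0 : left_id quat0 quat_add.
Proof. by case=> ????; congr Quat => /=; ring. Qed.
Lemma quat_addN : left_inverse quat0 quat_opp quat_add.
Proof. by case=> ????; congr Quat => /=; ring. Qed.

HB.instance Definition _ := GRing.isZmodule.Build quat
  quat_addA quat_addC quat_add0 quat_addN.

Lemma quat_mulA : associative quat_mul.
Proof. by case=> ????[????][????]; congr Quat => /=; ring. Qed.
Lemma quat_mul1 : left_id quat1 quat_mul.
Proof. by case=> ????; congr Quat => /=; ring. Qed.
Lemma quat_mulr1 : right_id quat1 quat_mul.
Proof. by case=> ????; congr Quat => /=; ring. Qed.
Lemma quat_mulDl : left_distributive quat_mul +%R.
Proof. by case=> ????[????][????]; congr Quat => /=; ring. Qed.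
Lemma quat_mulDr : right_distributive quat_mul +%R.
Proof. by case=> ????[????][????]; congr Quat => /=; ring. Qed.
Lemma quat1_neq0 : quat1 != 0.
Proof. by apply/eqP => -[] /eqP; rewrite oner_eq0. Qed.

HB.instance Definition _ := GRing.Zmodule_isNzRing.Build quat
  quat_mulA quat_mul1 quat_mulr1 quat_mulDl quat_mulDr quat1_neq0.

End Quaternions.

Definition qtensor (R : realType) (n1 n2 n3 : nat) :=
  {ffun 'I_n1 * 'I_n2 * 'I_n3 -> quat R}.

Definition simple_tensor (R : realType) n1 n2 n3 (T : qtensor R n1 n2 n3) : Prop :=
  T != 0 /\
  exists (a : 'I_n1 -> quat R) (b : 'I_n2 -> quat R) (c : 'I_n3 -> quat R),
    forall i j k, T (i, j, k) = a i * b j * c k.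

Definition sum_of_simple (R : realType) n1 n2 n3 (T : qtensor R n1 n2 n3) (s : nat) : Prop :=
  exists l : seq (qtensor R n1 n2 n3),
    [/\ size l = s, (forall S, S \in l -> simple_tensor S) & T = \sum_(S <- l) S].

Definition unit_tensor (R : realType) n1 n2 n3 (x : 'I_n1 * 'I_n2 * 'I_n3) (v : quat R)
  : qtensor R n1 n2 n3 := [ffun y => if y == x then v else 0].

Lemma sum_of_simple_exists (R : realType) n1 n2 n3 (T : qtensor R n1 n2 n3) :
  exists s, sum_of_simple T s.
Proof.
set l := [seq unit_tensor x (T x) | x <- enum [pred x | T x != 0]].
exists (size l), l; split => //.
- move=> S /mapP [[[i j] k] + ->]; rewrite mem_enum inE => Tx.
  split.
    apply/eqP => /ffunP /(_ (i, j, k)); rewrite !ffunE eqxx => E.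
    by rewrite E eqxx in Tx.
  exists (fun i' => if i' == i then 1 else 0), (fun j' => if j' == j then T (i, j, k) else 0),
         (fun k' => if k' == k then 1 else 0) => i' j' k'; rewrite ffunE.
  rewrite !xpair_eqE.
  idtac.
  case: (eqVneq i' i) => [_|_] /=; last by rewrite !mul0r.
  case: (eqVneq j' j) => [_|_] /=; last by rewrite mulr0 mul0r.
  by case: (eqVneq k' k) => [_|_] /=; rewrite ?mul1r ?mulr1 ?mulr0.
- apply/ffunP => x; rewrite big_map sum_ffunE.
  have [Tx0|Txn] := eqVneq (T x) 0.
    rewrite Tx0 big1_seq // => y _; rewrite ffunE.
    by case: eqP => // <-.
  rewrite (bigD1_seq x) ?enum_uniq ?mem_enum ?inE //=.
  rewrite ffunE eqxx big1_seq ?addr0 // => y /andP[yx _].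
  by rewrite ffunE eq_sym (negbTE yx).
Qed.

Lemma sum_of_simple_exists' (R : realType) n1 n2 n3 (T : qtensor R n1 n2 n3) :
  exists s, `[< sum_of_simple T s >].
Proof. by have [s Hs] := sum_of_simple_exists T; exists s; apply/asboolP. Qed.

Definition tensor_rank (R : realType) n1 n2 n3 (T : qtensor R n1 n2 n3) : nat :=
  ex_minn (P := fun s => `[< sum_of_simple T s >]) (sum_of_simple_exists' T).

Lemma tensor_rankP (R : realType) n1 n2 n3 (T : qtensor R n1 n2 n3) :
  sum_of_simple T (tensor_rank T) /\
  forall s, sum_of_simple T s -> (tensor_rank T <= s)%N.
Proof.
rewrite /tensor_rank; case: ex_minnP => s /asboolP Hs Hmin; split => // t Ht.
by apply: Hmin; apply/asboolP.
Qed.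

Definition frontal_slice (R : realType) n1 n2 n3 (T : qtensor R n1 n2 n3) (j : 'I_n2)
  : 'M[quat R]_(n1, n3) := \matrix_(i < n1, k < n3) T (i, j, k).

From HB Require Import structures.
From mathcomp Require Import all_boot all_order all_algebra.
From mathcomp Require Import boolp reals.
Set Implicit Arguments. Unset Strict Implicit. Unset Printing Implicit Defensive.
Import Order.TTheory GRing.Theory Num.Theory.
Local Open Scope ring_scope.

(* A tensor of rank at most r is exactly a sum of r "rank-one" tensors
   (a_i b_j c_k)_{ijk}, where the factors are allowed to vanish: zero terms
   are simply dropped from, or padded into, a decomposition into simple
   tensors (lemma [tensor_rank_leP]).  Independently, the frontal slices of
   such a sum \sum_t (a^t_i b^t_j c^t_k) are the matrices P D_j Q with
   P = (a^t_i)_{i,t}, D_j = diag(b^t_j)_t and Q = (c^t_k)_{t,k}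
   ([frontal_slice_rank_one_sum]); conversely every family of factorizations
   A_j = P D_j Q with diagonal D_j arises this way, since a tensor is
   determined by its frontal slices ([rank_one_sum_factorizationP]). *)

Section RankOneSums.
Variables (R : realType) (m p n : nat).
Implicit Types (T : qtensor R m p n).

Definition rank_one_tensor (a : 'I_m -> quat R) (b : 'I_p -> quat R)
    (c : 'I_n -> quat R) : qtensor R m p n :=
  [ffun x => a x.1.1 * b x.1.2 * c x.2].

Lemma rank_one_simple a b c :
  rank_one_tensor a b c != 0 -> simple_tensor (rank_one_tensor a b c).
Proof. by move=> nz; split=> //; exists a, b, c => i j k; rewrite ffunE. Qed.

(* Adding zero terms: a sum of s <= r simple tensors is a sum of exactly r
   rank-one tensors. *)
Lemma sum_of_simple_pad T s r :
  sum_of_simple T s -> (s <= r)%N ->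
  exists (a : 'I_r -> 'I_m -> quat R) (b : 'I_r -> 'I_p -> quat R)
         (c : 'I_r -> 'I_n -> quat R),
    T = \sum_t rank_one_tensor (a t) (b t) (c t).
Proof.
move=> [l [<- l_simple ->]] le_sr.
have factor (t : 'I_r) : exists abc : ('I_m -> quat R) * ('I_p -> quat R) * ('I_n -> quat R),
    nth 0 l t = rank_one_tensor abc.1.1 abc.1.2 abc.2.
  have [lt_tl|le_lt] := ltnP t (size l).
    have [_ [a [b [c E]]]] := l_simple _ (mem_nth 0 lt_tl).
    by exists (a, b, c); apply/ffunP => -[[i j] k]; rewrite E ffunE.
  exists (fun _ => 0, fun _ => 0, fun _ => 0); rewrite nth_default //.
  by apply/ffunP => x; rewrite !ffunE mulr0.
have [f Ef] := choice factor.
exists (fun t => (f t).1.1), (fun t => (f t).1.2), (fun t => (f t).2).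
rewrite (big_nth 0) big_mkord (big_ord_widen _ _ le_sr) big_mkcond.
apply: eq_bigr => t _; rewrite -Ef.
by case: ifP => // /negbT; rewrite -leqNgt => /(nth_default 0) ->.
Qed.

(* Dropping zero terms: a sum of r rank-one tensors has rank at most r. *)
Lemma rank_one_sum_rank r (a : 'I_r -> 'I_m -> quat R)
    (b : 'I_r -> 'I_p -> quat R) (c : 'I_r -> 'I_n -> quat R) :
  (tensor_rank (\sum_t rank_one_tensor (a t) (b t) (c t))%R <= r)%N.
Proof.
pose L t := rank_one_tensor (a t) (b t) (c t).
pose l := [seq L t | t <- enum 'I_r & L t != 0].
have decomp : sum_of_simple (\sum_t L t) (size l).
  exists l; split=> //.
    by move=> S /mapP [t]; rewrite mem_filter => /andP [nz _] ->; apply: rank_one_simple.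
  rewrite big_map big_filter big_enum_cond (bigID (fun t => L t != 0)) /=.
  by rewrite [X in _ + X]big1 ?addr0 // => t /negPn/eqP.
apply: leq_trans (proj2 (tensor_rankP _) _ decomp) _.
by rewrite size_map size_filter (leq_trans (count_size _ _)) ?size_enum_ord.
Qed.

Lemma tensor_rank_leP T r :
  (tensor_rank T <= r)%N <->
  exists (a : 'I_r -> 'I_m -> quat R) (b : 'I_r -> 'I_p -> quat R)
         (c : 'I_r -> 'I_n -> quat R),
    T = \sum_t rank_one_tensor (a t) (b t) (c t).
Proof.
split=> [le_rank_r | [a [b [c ->]]]]; last exact: rank_one_sum_rank.
exact: sum_of_simple_pad (proj1 (tensor_rankP T)) le_rank_r.
Qed.

Lemma frontal_slice_inj T T' :
  (forall j, frontal_slice T j = frontal_slice T' j) -> T = T'.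
Proof.
move=> eq_slices; apply/ffunP => -[[i j] k].
by have /matrixP /(_ i k) := eq_slices j; rewrite !mxE.
Qed.

Lemma frontal_slice_rank_one_sum r (a : 'I_r -> 'I_m -> quat R)
    (b : 'I_r -> 'I_p -> quat R) (c : 'I_r -> 'I_n -> quat R) j :
  frontal_slice (\sum_t rank_one_tensor (a t) (b t) (c t)) j =
  \matrix_(i, t) a t i *m diag_mx (\row_t b t j) *m \matrix_(t, k) c t k.
Proof.
apply/matrixP => i k; rewrite mul_mx_diag !mxE sum_ffunE.
by apply: eq_bigr => t _; rewrite !mxE ffunE.
Qed.

End RankOneSums.

Lemma diag_mx_of_diagonal (V : nzRingType) r (A : 'M[V]_r) :
  is_diag_mx A -> A = diag_mx (\row_t A t t).
Proof.
move=> /is_diag_mxP A_diag; apply/matrixP => i k; rewrite !mxE.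
by case: (eqVneq i k) => [-> | ne_ik]; rewrite ?mulr1n // mulr0n A_diag.
Qed.

Lemma rank_one_sum_factorizationP (R : realType) m p n r (T : qtensor R m p n) :
  (exists (a : 'I_r -> 'I_m -> quat R) (b : 'I_r -> 'I_p -> quat R)
          (c : 'I_r -> 'I_n -> quat R),
     T = \sum_t rank_one_tensor (a t) (b t) (c t)) <->
  exists (D : 'I_p -> 'M[quat R]_r) (P : 'M[quat R]_(m, r)) (Q : 'M[quat R]_(r, n)),
    (forall j, is_diag_mx (D j)) /\ (forall j, frontal_slice T j = P *m D j *m Q).
Proof.
split=> [[a [b [c ->]]] | [D [P [Q [D_diag slicesT]]]]].
  exists (fun j => diag_mx (\row_t b t j)), (\matrix_(i, t) a t i),
         (\matrix_(t, k) c t k).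
  by split=> j; [exact: diag_mx_is_diag | exact: frontal_slice_rank_one_sum].
exists (fun t i => P i t), (fun t j => D j t t), (fun t k => Q t k).
apply: frontal_slice_inj => j.
rewrite slicesT frontal_slice_rank_one_sum {1}(diag_mx_of_diagonal (D_diag j)).
by congr (_ *m _ *m _); apply/matrixP => ? ?; rewrite !mxE.
Qed.

Theorem mainTheorem2 (R : realType) (m p n r : nat) (T : qtensor R m p n) :
  (1 <= r)%N ->
  ((tensor_rank T <= r)%N <->
   exists (D : 'I_p -> 'M[quat R]_r) (P : 'M[quat R]_(m, r)) (Q : 'M[quat R]_(r, n)),
     (forall k, is_diag_mx (D k)) /\
     (forall k, frontal_slice T k = P *m D k *m Q)).
Proof.
move=> _; rewrite -rank_one_sum_factorizationP; exact: tensor_rank_leP.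
Qed.
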